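(* Let $\beta:[r]\to[n]$ be injective and $R\in L_n(T_R(\beta))$. If there exist $m$, $L\in L_m(P_m)$ and an increasing $\alpha:[r]\to[m]$ such that $L\,\Pi(\alpha,\beta)=\Pi(\alpha,\beta)\,R$, then $R=I_n$.
   Context: $\mathbb{F}$ is the field with two elements, $[n]=\{1,\dots,n\}$, $e_{n,i}$ standard basis column vectors, $I_n$ identity. $P_n=\{(i,j):i,j\in[n],i>j\}$; for transitive $T\subseteq P_n$, $L_n(T)=I_n+\mathrm{span}_{\mathbb{F}}\{e_{n,i}e_{n,j}^{\top}:(i,j)\in T\}$. $\Pi(\alpha,\beta)=\sum_{i=1}^re_{m,\alpha(i)}e_{n,\beta(i)}^{\top}$. For injective $\beta$, $T_R(\beta)=\{(i,j):i\in\mathrm{Im}(\beta),j<i,j\notin\{\beta(1),\dots,\beta(\beta^{-1}(i)-1)\}\}$ (a transitive subset of $P_n$). *)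

(* Field F = 'F_2. Index sets [n] are rendered as 'I_n
   (0-based, order preserved: index k in 'I_n corresponds to k+1 in [n]). *)
From HB Require Import structures.
From mathcomp Require Import all_boot all_order all_algebra.
Set Implicit Arguments. Unset Strict Implicit. Unset Printing Implicit Defensive.
Import GRing.Theory.
Local Open Scope ring_scope.

Definition Pn (n : nat) : rel 'I_n := fun i j => (j < i)%N.

(* L_n(T) = I_n + span_F {e_i e_j^T : (i,j) in T}: a matrix A lies in it iff
   A - I_n is supported on T, i.e. off T its entries are those of I_n. *)
Definition inL (n : nat) (T : rel 'I_n) (A : 'M['F_2]_n) : Prop :=
  forall i j : 'I_n, ~~ T i j -> A i j = (i == j)%:R.

Definition Pi (r m n : nat) (alpha : 'I_r -> 'I_m) (beta : 'I_r -> 'I_n)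
  : 'M['F_2]_(m, n) := \sum_(i < r) delta_mx (alpha i) (beta i).

Definition TR (r n : nat) (beta : 'I_r -> 'I_n) : rel 'I_n :=
  fun i j => [exists k : 'I_r, (beta k == i) && (j < i)%N &&
               [forall k' : 'I_r, (k' < k)%N ==> (beta k' != j)]].

From HB Require Import structures.
From mathcomp Require Import all_boot all_order all_algebra.
Set Implicit Arguments. Unset Strict Implicit. Unset Printing Implicit Defensive.
Import GRing.Theory.
Local Open Scope ring_scope.

(* Since alpha is injective, row alpha(k) of Pi(alpha,beta) is e_{beta(k)}^T,
   so entry (alpha(k), j) of L Pi = Pi R reads
     R (beta k) j = sum of L (alpha k) (alpha k') over k' with beta k' = j.
   If (beta k, j) lies in T_R(beta), every such k' comes after k, hence
   alpha k' > alpha k and L (alpha k) (alpha k') = 0 as L is lower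
   unitriangular; so R vanishes on T_R(beta) and agrees with I_n elsewhere. *)

Lemma lt_ord_inj (r m : nat) (alpha : 'I_r -> 'I_m) :
  {homo alpha : x y / (x < y)%N} -> injective alpha.
Proof.
move=> alpha_lt x y eq_xy; apply/val_inj.
by case: (ltngtP x y) => // /alpha_lt; rewrite eq_xy ltnn.
Qed.

Lemma inL_Pn_upper0 (m : nat) (L : 'M['F_2]_m) (a b : 'I_m) :
  inL (@Pn m) L -> (a < b)%N -> L a b = 0.
Proof.
move=> L_low lt_ab; rewrite L_low; last by rewrite /Pn -leqNgt ltnW.
by case: eqP lt_ab => // ->; rewrite ltnn.
Qed.

Section DeltaProducts.
Variables (R : pzSemiRingType) (p m n : nat).

Lemma mulmx_deltaE (A : 'M[R]_(p, m)) (i : 'I_m) (j : 'I_n) a b :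
  (A *m delta_mx i j) a b = A a i *+ (j == b).
Proof.
rewrite mxE (bigD1 i) //= mxE eqxx big1 ?addr0 => [|c /negbTE neq_ci].
  by rewrite mulr_natr eq_sym.
by rewrite mxE neq_ci mulr0.
Qed.

Lemma mul_delta_mxE (A : 'M[R]_(m, n)) (i : 'I_p) (j : 'I_m) a b :
  (delta_mx i j *m A) a b = A j b *+ (i == a).
Proof.
rewrite mxE (bigD1 j) //= mxE eqxx andbT big1 ?addr0 => [|c /negbTE neq_cj].
  by rewrite mulr_natl eq_sym.
by rewrite mxE neq_cj andbF mul0r.
Qed.

End DeltaProducts.

Section PiProducts.
Variables (r m n : nat) (alpha : 'I_r -> 'I_m) (beta : 'I_r -> 'I_n).

Lemma mulmx_PiE (p : nat) (L : 'M['F_2]_(p, m)) a j :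
  (L *m Pi alpha beta) a j = \sum_(k < r | beta k == j) L a (alpha k).
Proof.
rewrite /Pi mulmx_sumr summxE [RHS]big_mkcond; apply: eq_bigr => k _.
by rewrite mulmx_deltaE; case: (beta k == j).
Qed.

Lemma Pi_mulmxE (p : nat) (A : 'M['F_2]_(n, p)) a j :
  (Pi alpha beta *m A) a j = \sum_(k < r | alpha k == a) A (beta k) j.
Proof.
rewrite /Pi mulmx_suml summxE [RHS]big_mkcond; apply: eq_bigr => k _.
by rewrite mul_delta_mxE; case: (alpha k == a).
Qed.

Lemma Pi_mulmx_row : injective alpha ->
  forall p (A : 'M['F_2]_(n, p)) k j, (Pi alpha beta *m A) (alpha k) j = A (beta k) j.
Proof.
by move=> alpha_inj p A k j; rewrite Pi_mulmxE (big_pred1 k) // => k'; rewrite inj_eq.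
Qed.

End PiProducts.

Lemma TR_preimage_gt (r n : nat) (beta : 'I_r -> 'I_n) i j :
  TR beta i j -> exists2 k, beta k = i & forall k', beta k' = j -> (k < k')%N.
Proof.
move=> /existsP [k /andP [/andP [/eqP <- lt_j_k] /forallP first_j]].
exists k => // k' beta_k'.
have := first_j k'; rewrite beta_k' eqxx implybF -leqNgt leq_eqVlt.
by case/orP => // /eqP/val_inj eq_kk'; rewrite -beta_k' -eq_kk' ltnn in lt_j_k.
Qed.

Theorem lemma5 (r n : nat) (beta : 'I_r -> 'I_n) (R : 'M['F_2]_n) :
  injective beta ->
  inL (TR beta) R ->
  (exists (m : nat) (L : 'M['F_2]_m) (alpha : 'I_r -> 'I_m),
      [/\ inL (@Pn m) L,
          {homo alpha : x y / (x < y)%N} &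
          L *m Pi alpha beta = Pi alpha beta *m R]) ->
  R = 1%:M.
Proof.
move=> _ R_TR [m [L [alpha [L_low alpha_lt eq_LPi]]]].
have alpha_inj := lt_ord_inj alpha_lt.
apply/matrixP => i j; rewrite mxE.
have [/TR_preimage_gt [k <- j_after_k] | /R_TR //] := boolP (TR beta i j).
have /negbTE -> : beta k != j by apply/eqP => /j_after_k; rewrite ltnn.
rewrite -(Pi_mulmx_row beta alpha_inj) -eq_LPi mulmx_PiE.
by apply: big1 => k' /eqP /j_after_k /alpha_lt; apply: inL_Pn_upper0.
Qed.
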